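(* Let $s\in\mathbb{Z}$ and let $f$ be a $k$-face of $\square_{\alpha_s}$ with vertices $p_1,\ldots,p_{2^k}\in G_{\alpha_s}$. Then: (1) the set $\{g_{\alpha_s}(p_1),\ldots,g_{\alpha_s}(p_{2^k})\}$ is the vertex set of a face $e$ of $\square_{\alpha_{s+1}}$; (2) for every face $e_1\subseteq e$ there is a face $f_1\subseteq f$ with $g_{\alpha_s}(f_1)=e_1$; (3) if $e_1,e_2$ are two opposite facets of $e$, then there exists a pair of opposite facets $f_1,f_2$ of $f$ with $g_{\alpha_s}(f_1)=e_1$ and $g_{\alpha_s}(f_2)=e_2$.
   Context: Fix $d\ge 1$, $\lambda>0$ and scales $\alpha_s:=\lambda 2^s$, $s\in\mathbb{Z}$. The grids $(G_{\alpha_s})_{s\in\mathbb{Z}}$ satisfy $G_{\alpha_0}=\lambda\mathbb{Z}^d$ and, for every $s$, $G_{\alpha_{s+1}}=2(G_{\alpha_s}-O_s)+O_s+\frac{\alpha_s}{2}\varepsilon_s$ for some $O_s\in G_{\alpha_s}$ and sign vector $\varepsilon_s\in\{-1,+1\}^d$; so $G_{\alpha_s}$ is a translate of $\alpha_s\mathbb{Z}^d$. $\mathrm{Vor}_G(x)$ is the Voronoi cell of $x\in G$ w.r.t. $G$ (the closed axis-parallel cube of side $\alpha_s$ centered at $x$ for $G=G_{\alpha_s}$); each $x\in G_{\alpha_s}$ lies in $\mathrm{Vor}_{G_{\alpha_{s+1}}}(y)$ for a unique $y\in G_{\alpha_{s+1}}$. The cubical complex $\square_{\alpha_s}$ consists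 of the faces $\prod_{j=1}^d[x_j,x_j+m_j]$ with $(x_1,\dots,x_d)\in G_{\alpha_s}$ and each $m_j\in\{0,\alpha_s\}$; its dimension is the number of $j$ with $m_j\neq 0$, and its vertices are its points lying in $G_{\alpha_s}$ ($0$-faces are the grid points). A facet of a $k$-face $E$ is a $(k-1)$-face contained in $E$; two facets of $E$ are opposite if they are disjoint. The map $g_{\alpha_s}$ sends a vertex $x\in G_{\alpha_s}$ to the unique $y\in G_{\alpha_{s+1}}$ with $x\in\mathrm{Vor}_{G_{\alpha_{s+1}}}(y)$, and sends a face $f$ of $\square_{\alpha_s}$ to the convex hull of the images of its vertices. *)

From HB Require Import structures.
From mathcomp Require Import all_boot all_order all_algebra.
From mathcomp Require Import boolp classical_sets reals.
Set Implicit Arguments. Unset Strict Implicit. Unset Printing Implicit Defensive.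
Import Order.TTheory GRing.Theory Num.Theory.
Local Open Scope ring_scope.
Local Open Scope classical_set_scope.

Section Defs.
Variables (R : realType) (d : nat).
Notation pt := 'rV[R]_d.

Definition alpha (lam : R) (s : int) : R := lam * (2 : R) ^ s.

Definition scaled_Zd (lam : R) : set pt :=
  [set x | forall j : 'I_d, exists z : int, x ord0 j = lam * z%:~R].

Definition grid_family (lam : R) (G : int -> set pt) : Prop :=
  G 0 = scaled_Zd lam /\
  forall s : int, exists (O eps : pt),
    G s O /\ (forall j : 'I_d, eps ord0 j = 1 \/ eps ord0 j = -1) /\
    G (s + 1) = [set 2 *: (y - O) + O + (alpha lam s / 2) *: eps | y in G s].

Definition dist2 (u v : pt) : R := \sum_(j < d) (u ord0 j - v ord0 j) ^+ 2.

Definition Vor (A : set pt) (x : pt) : set pt :=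
  [set y | forall z, A z -> dist2 y x <= dist2 y z].

Definition gmap (G : int -> set pt) (s : int) (x : pt) : pt :=
  xget 0 [set y | G (s + 1) y /\ Vor (G (s + 1)) y x].

Definition box (x m : pt) : set pt :=
  [set y | forall j : 'I_d, x ord0 j <= y ord0 j <= x ord0 j + m ord0 j].

Definition kface (lam : R) (G : int -> set pt) (s : int) (k : nat) (F : set pt) :=
  exists x m : pt, G s x /\
    (forall j : 'I_d, m ord0 j = 0 \/ m ord0 j = alpha lam s) /\
    #|[set j : 'I_d | m ord0 j != 0]| = k /\ F = box x m.

Definition is_face lam G s (F : set pt) := exists k, kface lam G s k F.

Definition vertices (G : int -> set pt) (s : int) (F : set pt) : set pt :=
  [set p | G s p /\ F p].

Definition facet lam G s (F E : set pt) :=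
  exists k, kface lam G s k.+1 E /\ kface lam G s k F /\ F `<=` E.

Definition hull (A : set pt) : set pt :=
  [set y | exists n (v : 'I_n -> pt) (t : 'I_n -> R),
     (forall i, A (v i)) /\ (forall i, 0 <= t i) /\ \sum_(i < n) t i = 1 /\
     y = \sum_(i < n) t i *: v i].

Definition gface G s (F : set pt) : set pt := hull (gmap G s @` vertices G s F).

End Defs.

(* Both grids are translated lattices: G_{alpha_s} = o + a Z^d and
   G_{alpha_{s+1}} = o + (a/2) eps + 2a Z^d with a = alpha_s.  Squared distance splits
   over coordinates, and in each coordinate a fine point is at distance a/2 from exactly
   one coarse point and at distance at least 3a/2 from all others; so g_{alpha_s}
   rounds coordinatewise.  The two ends of an edge [x_j, x_j + a] are therefore sent to
   the same coarse point or to two adjacent ones, and the image of the face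
   prod_j [x_j, x_j + m_j] is the face prod_j [g(x)_j, g(x)_j + p_j] with p_j in {0, 2a},
   whose vertices are exactly the images of the vertices.  A face of the image is lifted
   one coordinate at a time, by choosing the endpoint of [x_j, x_j + m_j] that rounds to
   it.  Finally, two disjoint facets of a box fix the same coordinate at its two values,
   and their lifts fix that coordinate of f at its two values as well. *)

From HB Require Import structures.
From mathcomp Require Import all_boot all_order all_algebra.
From mathcomp Require Import boolp classical_sets reals.
From mathcomp Require Import ring lra zify.
Set Implicit Arguments. Unset Strict Implicit. Unset Printing Implicit Defensive.
Import Order.TTheory GRing.Theory Num.Theory.
Local Open Scope ring_scope.
Local Open Scope classical_set_scope.

Section Coset.
Variable R : realType.
Implicit Types a b c u v q : R.

Definition in_coset c a u := exists z : int, u = c + a * z%:~R.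

Definition half_apart a u q := u - q = a / 2 \/ u - q = - (a / 2).

Lemma intr_cases (z : int) :
  (z%:~R : R) = 0 \/ 1 <= (z%:~R : R) \/ (z%:~R : R) <= -1.
Proof.
have [->|[zpos|zneg]] : z = 0 \/ (1 <= z)%R \/ (z <= -1)%R by lia.
- by left.
- by right; left; rewrite -(ler_int R) in zpos.
- by right; right; rewrite -(ler_int R) intrN in zneg.
Qed.

Lemma in_coset_diff c a u v :
  in_coset c a u -> in_coset c a v -> exists z : int, v = u + a * z%:~R.
Proof. by case=> z1 ->; case=> z2 ->; exists (z2 - z1); rewrite intrB; lra. Qed.

Lemma in_coset_sep c a u v : 0 < a -> in_coset c a u -> in_coset c a v ->
  v = u \/ u + a <= v \/ v <= u - a.
Proof.
move=> a_gt0 hu hv; have [z ->] := in_coset_diff hu hv.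
suff : a * z%:~R = 0 \/ a <= a * z%:~R \/ a * z%:~R <= - a by lra.
have [->|[zpos|zneg]] := intr_cases z.
- by left; rewrite mulr0.
- by right; left; rewrite -[X in X <= _]mulr1 (ler_pM2l a_gt0).
- by right; right; rewrite -[- a]mulrN1 (ler_pM2l a_gt0).
Qed.

Lemma in_coset_addr c a u : in_coset c a u -> in_coset c a (u + a).
Proof. by case=> z ->; exists (z + 1); rewrite intrD; lra. Qed.

Lemma in_coset_between c a b u v : 0 < a -> (b = 0 \/ b = a) ->
  in_coset c a u -> in_coset c a v -> u <= v <= u + b -> v = u \/ v = u + b.
Proof. by move=> a_gt0 hb hu hv; have := in_coset_sep a_gt0 hu hv; lra. Qed.

Lemma half_apart_uniq c a u q q' : 0 < a ->
  in_coset c (2 * a) q -> in_coset c (2 * a) q' ->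
  half_apart a u q -> half_apart a u q' -> q' = q.
Proof.
move=> a_gt0 hq hq'; have := in_coset_sep (_ : 0 < 2 * a) hq hq'.
rewrite /half_apart; lra.
Qed.

Lemma half_apart_succ c a u q q' : 0 < a ->
  in_coset c (2 * a) q -> in_coset c (2 * a) q' ->
  half_apart a u q -> half_apart a (u + a) q' -> q' = q \/ q' = q + 2 * a.
Proof.
move=> a_gt0 hq hq'; have := in_coset_sep (_ : 0 < 2 * a) hq hq'.
rewrite /half_apart; lra.
Qed.

Lemma half_apart_lt c a u q q' : 0 < a ->
  in_coset c (2 * a) q -> in_coset c (2 * a) q' ->
  half_apart a u q -> q' != q -> (u - q) ^+ 2 < (u - q') ^+ 2.
Proof.
move=> a_gt0 hq hq' + /eqP; have := in_coset_sep (_ : 0 < 2 * a) hq hq'.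
rewrite /half_apart; nra.
Qed.

Lemma half_apart_exists o a e u : (e = 1 \/ e = -1) -> in_coset o a u ->
  exists2 q, in_coset (o + a / 2 * e) (2 * a) q & half_apart a u q.
Proof.
move=> he [n ->].
have [k ek hk] : exists2 k : int, k%:~R = e & (k = 1 \/ k = -1).
  by case: he => ->; [exists 1; last left | exists (-1); rewrite ?intrN; last right].
(* [2 n - k] is odd, so rounding [(2 n - k + 1) / 4] down leaves a remainder [1] or [-1]. *)
pose h := ((2 * n - k + 1) %/ 4)%Z.
have odd_rem : 2 * n - k - 4 * h = 1 \/ 2 * n - k - 4 * h = -1.
  have := divz_eq (2 * n - k + 1) 4; have := modz_ge0 (2 * n - k + 1) (isT : 4 != 0 :> int).
  have := ltz_mod (2 * n - k + 1) (isT : 4 != 0 :> int); rewrite /h; lia.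
exists (o + a / 2 * e + 2 * a * h%:~R); first by exists h.
rewrite /half_apart (_ : _ - _ = a / 2 * (2 * n - k - 4 * h)%:~R); last first.
  by rewrite !intrB !intrM ek; field.
by case: odd_rem => ->; [left; rewrite mulr1 | right; rewrite mulrN1].
Qed.

(* One coordinate of the lift of a face of the image box: [lift_lo] is the endpoint
   of [[x, x + m]] rounding to [y], and [lift_len] drops the edge exactly when the
   face is flat ([b = 0]) in a direction where the image edge is not ([p != 0]). *)
Definition lift_lo (x m g y : R) := if y == g then x else x + m.

Definition lift_len (m p b : R) := if (b == 0) && (p != 0) then 0 else m.

Lemma half_apart_lift a x m g p y b : 0 < a ->
  (m = 0 /\ p = 0 \/ m = a /\ (p = 0 \/ p = 2 * a)) ->
  half_apart a x g -> half_apart a (x + m) (g + p) ->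
  (b = 0 \/ b = 2 * a) /\ (y = g \/ y = g + p) /\ y + b <= g + p ->
  [/\ x <= lift_lo x m g y, lift_lo x m g y + lift_len m p b <= x + m,
      half_apart a (lift_lo x m g y) y &
      half_apart a (lift_lo x m g y + lift_len m p b) (y + b)].
Proof.
rewrite /lift_lo /lift_len /half_apart => a_gt0 hmp hx hxm [hb [hy hyb]].
have [eyg|/eqP nyg] := eqVneq y g; have [eb|/eqP nb] := eqVneq b 0;
  have [ep|/eqP np] := eqVneq p 0; rewrite /=; split; lra.
Qed.

End Coset.

Section Lattice.
Variables (R : realType) (d : nat).
Notation pt := 'rV[R]_d.
Implicit Types (a b : R) (c o x m eps : pt).

Definition lattice c a : set pt :=
  [set y | forall j, in_coset (c ord0 j) a (y ord0 j)].

Lemma lattice_recenter c a o : lattice c a o -> lattice c a = lattice o a.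
Proof.
move=> ho; apply/seteqP; split=> y hy j.
- by have [z ->] := in_coset_diff (ho j) (hy j); exists z.
- by have [w ew] := ho j; have [z ->] := hy j; exists (w + z); rewrite ew intrD; lra.
Qed.

Lemma lattice_addr c b x m : lattice c b x ->
  (forall j, m ord0 j = 0 \/ m ord0 j = b) -> lattice c b (x + m).
Proof.
move=> hx hm j; rewrite mxE.
by case: (hm j) => ->; [rewrite addr0 | apply: in_coset_addr].
Qed.

Lemma lattice_dilate c a o eps : lattice c a o ->
  [set 2 *: (y - o) + o + (a / 2) *: eps | y in lattice c a] =
  lattice (o + (a / 2) *: eps) (2 * a).
Proof.
move=> ho; rewrite (lattice_recenter ho); apply/seteqP; split.
- by move=> _ [y hy <-] j; rewrite !mxE; have [z ->] := hy j; exists z; lra.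
- move=> t ht; exists (2^-1 *: (t + o - (a / 2) *: eps)).
    by move=> j; rewrite !mxE; have [z ->] := ht j; exists z; rewrite !mxE; lra.
  by apply/rowP => j; rewrite !mxE; lra.
Qed.

Lemma lattice_dilate_inv c a o eps (A : set pt) :
  [set 2 *: (y - o) + o + (a / 2) *: eps | y in A] = lattice c (2 * a) ->
  A = lattice (2^-1 *: (c + o - (a / 2) *: eps)) a.
Proof.
move=> hA; apply/seteqP; split=> y hy.
- have : lattice c (2 * a) (2 *: (y - o) + o + (a / 2) *: eps) by rewrite -hA; exists y.
  by move=> + j => /(_ j) [z]; rewrite !mxE => hz; exists z; lra.
- have : lattice c (2 * a) (2 *: (y - o) + o + (a / 2) *: eps).
    by move=> j; have [z] := hy j; rewrite !mxE => ->; exists z; lra.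
  rewrite -hA => -[y' hy' e]; suff -> : y = y' by [].
  by apply/rowP => j; have := congr1 (fun v : pt => v ord0 j) e; rewrite !mxE; lra.
Qed.

Lemma alpha_gt0 (lam : R) (s : int) : 0 < lam -> 0 < alpha lam s.
Proof. by move=> lam_gt0; rewrite /alpha mulr_gt0 // exprz_gt0. Qed.

Lemma alphaS (lam : R) (s : int) : alpha lam (s + 1) = 2 * alpha lam s.
Proof. by rewrite /alpha exprzDr ?expr1z ?unitfE ?pnatr_eq0 //; lra. Qed.

Lemma grid_family_lattice (lam : R) (G : int -> set pt) : grid_family lam G ->
  forall s, exists c, G s = lattice c (alpha lam s).
Proof.
case=> G0 GS; have step s : (exists c, G s = lattice c (alpha lam s)) <->
    (exists c, G (s + 1) = lattice c (alpha lam (s + 1))).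
  have [o [eps [ho [_ ->]]]] := GS s; rewrite alphaS; split=> -[c hc].
  - exists (o + (alpha lam s / 2) *: eps); rewrite hc lattice_dilate //.
    by rewrite -hc.
  - by exists (2^-1 *: (c + o - (alpha lam s / 2) *: eps)); apply: lattice_dilate_inv.
elim/int_rect.
- exists 0; rewrite G0 /alpha expr0z mulr1; apply/seteqP.
  by split=> y hy j; have [z hz] := hy j; exists z; rewrite mxE add0r in hz *.
- by move=> n /step; rewrite -PoszD addn1.
- by move=> n IH; apply/step; rewrite (_ : _ + 1 = - n%:Z) //; lia.
Qed.

End Lattice.

Section Hull.
Variables (R : realType) (d : nat).
Notation pt := 'rV[R]_d.
Implicit Types (y m : pt) (A : set pt).

Definition corner y m (S : {ffun 'I_d -> bool}) : pt :=
  \row_j (y ord0 j + (if S j then m ord0 j else 0)).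

Lemma hull_sub_box A y m : A `<=` box y m -> hull A `<=` box y m.
Proof.
move=> hA _ [n [v [t [hv [t_ge0 [t_sum1 ->]]]]]] j.
rewrite summxE; under eq_bigr do rewrite mxE.
have convex (u : R) : u = \sum_(i < n) t i * u by rewrite -big_distrl /= t_sum1 mul1r.
apply/andP; split; [rewrite [leLHS]convex | rewrite [leRHS]convex];
  apply: ler_sum => i _; apply: ler_wpM2l => //; by have /(_ j)/andP[] := hA _ (hv i).
Qed.

Lemma box_sub_hull A y m : (forall j, 0 <= m ord0 j) ->
  (forall S, A (corner y m S)) -> box y m `<=` hull A.
Proof.
move=> m_ge0 hA z hz.
pose t j := if m ord0 j == 0 then 0 else (z ord0 j - y ord0 j) / m ord0 j.
have t01 j : 0 <= t j <= 1.
  rewrite /t; case: eqP => [_|/eqP mj]; first by rewrite lexx ler01.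
  have mj_gt0 : 0 < m ord0 j by rewrite lt_def mj m_ge0.
  have /andP[h1 h2] := hz j.
  by rewrite divr_ge0 ?subr_ge0 //= ler_pdivrMr // mul1r; lra.
have tm j : t j * m ord0 j = z ord0 j - y ord0 j.
  rewrite /t; case: eqP => [m0|/eqP mj]; last by rewrite divfK.
  by have /andP[] := hz j; rewrite m0; lra.
(* Corner [S] gets weight [prod_j (t_j or 1 - t_j)]: a product probability with mean [z]. *)
pose w (S : {ffun 'I_d -> bool}) := \prod_j (if S j then t j else 1 - t j).
have sum_enum (F : {ffun 'I_d -> bool} -> R) :
    \sum_(i < #|[set: {ffun 'I_d -> bool}]|) F (enum_val i) = \sum_S F S.
  by rewrite -big_enum_val; apply: eq_bigl => S; rewrite in_setT.
have sum_prod (F : 'I_d -> bool -> R) :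
    \sum_(S : {ffun 'I_d -> bool}) \prod_i F i (S i) = \prod_i (F i true + F i false).
  by rewrite -(bigA_distr_bigA F); apply: eq_bigr => i _; rewrite big_bool.
exists #|[set: {ffun 'I_d -> bool}]|, (fun i => corner y m (enum_val i)),
  (fun i => w (enum_val i)); split; first by move=> i; apply: hA.
split; first by move=> i; apply: prodr_ge0 => j _; case: ifP => _; have := t01 j; lra.
split.
  rewrite sum_enum (sum_prod (fun j b => if b then t j else 1 - t j)).
  by rewrite big1 // => i _; lra.
apply/rowP => j; rewrite summxE; under eq_bigr do rewrite !mxE.
rewrite (sum_enum (fun S => w S * (y ord0 j + (if S j then m ord0 j else 0)))).
pose H i (b : bool) := (if b then t i else 1 - t i) *
  (if i == j then y ord0 j + (if b then m ord0 j else 0) else 1).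
transitivity (\sum_(S : {ffun 'I_d -> bool}) \prod_i H i (S i)).
  rewrite sum_prod (bigD1 j) //= big1; last by move=> i /negbTE ij; rewrite /H ij !mulr1; lra.
  by rewrite /H eqxx mulr1; have := tm j; lra.
apply: eq_bigr => S _; rewrite /H big_split /= /w; congr (_ * _).
by rewrite (bigD1 j) //= eqxx big1 ?mulr1 // => i /negbTE ->.
Qed.

End Hull.

Section Boxes.
Variables (R : realType) (d : nat).
Notation pt := 'rV[R]_d.
Implicit Types x y m g p b : pt.

Definition supp (v : pt) : {set 'I_d} := [set j | v ord0 j != 0]%SET.

Lemma kfaceP (lam : R) (G : int -> set pt) (s : int) (k : nat) (f : set pt) :
  kface lam G s k f <-> exists x m, [/\ G s x,
    forall j, m ord0 j = 0 \/ m ord0 j = alpha lam s, k = #|supp m| & f = box x m].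
Proof.
have cardE m : #|[set j : 'I_d | m ord0 j != 0]| = #|supp m|.
  by apply: eq_card => j; rewrite !inE; apply/idP/idP; rewrite in_setE.
by split=> [[x [m [Gx [hm [<- ->]]]]] | [x [m [Gx hm -> ->]]]]; exists x, m; rewrite cardE.
Qed.

Lemma box_inj x m x' m' : (forall j, 0 <= m ord0 j) -> (forall j, 0 <= m' ord0 j) ->
  box x m = box x' m' -> x = x' /\ m = m'.
Proof.
move=> m_ge0 m'_ge0 e.
have lo (u v : pt) : (forall j, 0 <= v ord0 j) -> box u v u.
  by move=> hv j; rewrite lexx lerDl hv.
have hi (u v : pt) : (forall j, 0 <= v ord0 j) -> box u v (u + v).
  by move=> hv j; rewrite mxE lexx lerDl hv.
have := lo x m m_ge0; have := hi x m m_ge0; rewrite e => hxm hx.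
have := lo x' m' m'_ge0; have := hi x' m' m'_ge0; rewrite -e => hx'm' hx'.
have ex : x = x'.
  by apply/rowP => j; have /andP[] := hx j; have /andP[] := hx' j; lra.
split=> //; subst x'; apply/rowP => j.
by have := hxm j; have := hx'm' j; rewrite !mxE => /andP[_ ?] /andP[_ ?]; lra.
Qed.

Lemma card_subset_succ (T : finType) (A B : {set T}) : A \subset B ->
  #|B| = #|A|.+1 -> exists2 j, j \in B & A = B :\ j.
Proof.
move=> AB cardB; have /subsetPn [j jB jA] : ~~ (B \subset A).
  by apply/negP => /subset_leq_card; rewrite cardB ltnn.
have cardBj : #|B :\ j| = #|A| by move: (cardsD1 j B); rewrite jB cardB add1n => -[].
exists j => //; apply/eqP; rewrite eqEcard cardBj leqnn andbT.
apply/fintype.subsetP => i iA; rewrite !inE (fintype.subsetP AB) // andbT.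
by apply: contraNneq jA => <-.
Qed.

Lemma hull_lattice_box c (b : R) y m : 0 <= b -> lattice c b y ->
  (forall j, m ord0 j = 0 \/ m ord0 j = b) ->
  hull [set p | lattice c b p /\ box y m p] = box y m.
Proof.
move=> b_ge0 hy hm; have m_ge0 j : 0 <= m ord0 j by case: (hm j) => ->.
apply/seteqP; split; first by apply: hull_sub_box => p [].
apply: box_sub_hull => // S; split=> j; rewrite /corner mxE; case: (S j) => /=.
- by case: (hm j) => ->; [rewrite addr0 | apply: in_coset_addr]; apply: hy.
- by rewrite addr0; apply: hy.
- by have := m_ge0 j; lra.
- by have := m_ge0 j; lra.
Qed.

Definition subface_at (L : R) g p y b := forall i,
  (b ord0 i = 0 \/ b ord0 i = L) /\
  (y ord0 i = g ord0 i \/ y ord0 i = g ord0 i + p ord0 i) /\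
  y ord0 i + b ord0 i <= g ord0 i + p ord0 i.

(* [box y b] is the facet of [box g p] orthogonal to direction [j]. *)
Definition facet_at (L : R) g p y b (j : 'I_d) :=
  [/\ subface_at L g p y b, j \in supp p & supp b = supp p :\ j].

Lemma facet_at_dir (L : R) g p y b j : 0 < L ->
  (forall i, p ord0 i = 0 \/ p ord0 i = L) -> facet_at L g p y b j ->
  [/\ p ord0 j = L, b ord0 j = 0 & forall i, i != j -> p ord0 i = L -> b ord0 i = L].
Proof.
move=> L_gt0 hp [hyb jp Sb].
have inSb i : (i \in supp b) = (i != j) && (i \in supp p) by rewrite Sb !inE.
split.
- by move: jp; rewrite inE; case: (hp j) => ->; rewrite ?eqxx.
- by apply/eqP; have := inSb j; rewrite eqxx inE => /negbT; rewrite negbK.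
- move=> i ij piL; have [[b0|//] _] := hyb i; move: (inSb i).
  by rewrite ij !inE piL b0 eqxx (lt0r_neq0 L_gt0).
Qed.

Lemma facet_at_disjoint (L : R) g p y1 b1 j1 y2 b2 j2 : 0 < L ->
  (forall i, p ord0 i = 0 \/ p ord0 i = L) ->
  facet_at L g p y1 b1 j1 -> facet_at L g p y2 b2 j2 ->
  box y1 b1 `&` box y2 b2 = set0 -> j1 = j2 /\ y1 ord0 j1 <> y2 ord0 j1.
Proof.
move=> L_gt0 hp F1 F2 disj.
have [p1 _ b1L] := facet_at_dir L_gt0 hp F1.
have [_ _ b2L] := facet_at_dir L_gt0 hp F2.
case: F1 F2 => [hyb1 _ _] [hyb2 _ _].
suff meet : j1 != j2 \/ y1 ord0 j1 = y2 ord0 j1 -> False.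
  have [<-|j12] := eqVneq j1 j2; last by case: meet; left.
  by split=> // e; apply: meet; right.
move=> j1j2; pose z := \row_i (if i == j1 then y1 ord0 i else y2 ord0 i).
suff : (box y1 b1 `&` box y2 b2) z by rewrite disj.
have coords i := conj (hp i) (conj (hyb1 i) (hyb2 i)).
split=> i; rewrite mxE; have [->|ij1] := eqVneq i j1.
- by have := coords j1; lra.
- by have := coords i; case: (hp i) => [|piL]; [|have := b1L i ij1 piL]; lra.
- have := coords j1; case: j1j2 => [j12|]; last by lra.
  by have := b2L _ j12 p1; lra.
- by have := coords i; lra.
Qed.

End Boxes.

Section Rounding.
Variables (R : realType) (d : nat) (lam : R) (G : int -> set 'rV[R]_d) (s : int).
Variables (o eps : 'rV[R]_d) (a : R).
Hypotheses (a_gt0 : 0 < a) (alpha_s : alpha lam s = a) (Gs : G s = lattice o a)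
  (Gs1 : G (s + 1) = lattice (o + (a / 2) *: eps) (2 * a))
  (eps_sign : forall j, eps ord0 j = 1 \/ eps ord0 j = -1).
Notation pt := 'rV[R]_d.
Local Notation c1 := (o + (a / 2) *: eps).
Local Notation gm := (gmap G s).
Implicit Types x y m b : pt.

Lemma gmap_eq x y : lattice o a x -> lattice c1 (2 * a) y ->
  (forall j, half_apart a (x ord0 j) (y ord0 j)) -> gm x = y.
Proof.
move=> hx hy hxy.
have sq_le z i : lattice c1 (2 * a) z ->
    (x ord0 i - y ord0 i) ^+ 2 <= (x ord0 i - z ord0 i) ^+ 2.
  move=> hz; have [-> //|zy] := eqVneq (z ord0 i) (y ord0 i).
  exact/ltW/(half_apart_lt a_gt0 (hy i) (hz i) (hxy i) zy).
rewrite /gmap; apply: xget_unique.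
  split; first by rewrite Gs1.
  by move=> z; rewrite Gs1 => hz; apply: ler_sum => i _; apply: sq_le.
move=> y' [hy' Vy']; rewrite Gs1 in hy'; apply/rowP => j; apply/eqP/negPn/negP => y'y.
have := Vy' y; rewrite Gs1 => /(_ hy); rewrite /dist2 (bigD1 j) // [leRHS](bigD1 j) //=.
have := half_apart_lt a_gt0 (hy j) (hy' j) (hxy j) y'y.
have : \sum_(i | i != j) (x ord0 i - y ord0 i) ^+ 2 <=
       \sum_(i | i != j) (x ord0 i - y' ord0 i) ^+ 2 by apply: ler_sum => i _; apply: sq_le.
lra.
Qed.

Lemma gmap_round x : lattice o a x ->
  lattice c1 (2 * a) (gm x) /\ forall j, half_apart a (x ord0 j) (gm x ord0 j).
Proof.
move=> hx; have /fin_all_exists [q hq] : forall j, exists q,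
    in_coset (c1 ord0 j) (2 * a) q /\ half_apart a (x ord0 j) q.
  by move=> j; rewrite !mxE; have [q] := half_apart_exists (eps_sign j) (hx j); exists q.
have hq1 : lattice c1 (2 * a) (\row_j q j) by move=> j; rewrite mxE; case: (hq j).
have -> : gm x = \row_j q j by apply: gmap_eq => // j; rewrite mxE; case: (hq j).
by split=> // j; rewrite mxE; case: (hq j).
Qed.

Definition gext x m : pt := gm (x + m) - gm x.

Lemma gmapD x m : gm (x + m) = gm x + gext x m.
Proof. by rewrite /gext addrCA subrr addr0. Qed.

Lemma twice_a_gt0 : 0 < 2 * a.
Proof. by rewrite pmulr_rgt0. Qed.

Section Lifting.
Variables x m : pt.
Hypotheses (hx : lattice o a x) (hm : forall j, m ord0 j = 0 \/ m ord0 j = a).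
Local Notation p := (gext x m).

Lemma gext_coord j : m ord0 j = 0 /\ p ord0 j = 0 \/
  m ord0 j = a /\ (p ord0 j = 0 \/ p ord0 j = 2 * a).
Proof.
have [gx hgx] := gmap_round hx; have [gxm hgxm] := gmap_round (lattice_addr hx hm).
move: (hgxm j); rewrite /gext !mxE; case: (hm j) => ->.
- by rewrite addr0 => /(half_apart_uniq a_gt0 (gx j) (gxm j) (hgx j)) ->; lra.
- by move=> /(half_apart_succ a_gt0 (gx j) (gxm j) (hgx j)); lra.
Qed.

Lemma gext_sign j : p ord0 j = 0 \/ p ord0 j = 2 * a.
Proof. by have := gext_coord j; tauto. Qed.

Lemma gext_ge0 j : 0 <= p ord0 j.
Proof. by case: (gext_sign j) => ->; have := twice_a_gt0; lra. Qed.

Lemma gext_eq2a j : p ord0 j = 2 * a -> m ord0 j = a.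
Proof. by case: (gext_coord j) => [[_ ->]|[]//]; have := a_gt0; lra. Qed.

Lemma subbox_face_at y b : lattice c1 (2 * a) y ->
  (forall j, b ord0 j = 0 \/ b ord0 j = 2 * a) ->
  box y b `<=` box (gm x) p -> subface_at (2 * a) (gm x) p y b.
Proof.
move=> hy hb sub j; have [gx _] := gmap_round hx.
have b_ge0 i : 0 <= b ord0 i by case: (hb i) => ->; have := twice_a_gt0; lra.
have lo : box y b y by move=> i; rewrite lexx lerDl b_ge0.
have hi : box y b (y + b) by move=> i; rewrite mxE lexx lerDl b_ge0.
have /andP[ylo yhi] := sub _ lo j; have /andP[_] := sub _ hi j; rewrite mxE => yb.
split; first exact: hb; split=> //.
apply: (in_coset_between (c := c1 ord0 j) twice_a_gt0 (gext_sign j) (gx j) (hy j)).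
by rewrite ylo.
Qed.

Lemma subface_at_lattice y b : subface_at (2 * a) (gm x) p y b ->
  lattice c1 (2 * a) y /\ lattice c1 (2 * a) (y + b).
Proof.
move=> hyb; have [gx _] := gmap_round hx.
have hy : lattice c1 (2 * a) y.
  move=> j; have [_ [[->|->] _]] := hyb j; first exact: gx.
  by case: (gext_sign j) => ->; [rewrite addr0 | apply: in_coset_addr]; apply: gx.
by split=> //; apply: lattice_addr => // j; case: (hyb j).
Qed.

Definition lift_corner y : pt :=
  \row_j lift_lo (x ord0 j) (m ord0 j) (gm x ord0 j) (y ord0 j).

Definition lift_extent b : pt := \row_j lift_len (m ord0 j) (p ord0 j) (b ord0 j).

Lemma lift_cornerE y j :
  lift_corner y ord0 j = lift_lo (x ord0 j) (m ord0 j) (gm x ord0 j) (y ord0 j).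
Proof. by rewrite mxE. Qed.

Lemma lift_extentE b j : lift_extent b ord0 j = lift_len (m ord0 j) (p ord0 j) (b ord0 j).
Proof. by rewrite mxE. Qed.

Lemma lift_subface y b : subface_at (2 * a) (gm x) p y b ->
  [/\ lattice o a (lift_corner y),
      forall j, lift_extent b ord0 j = 0 \/ lift_extent b ord0 j = a,
      box (lift_corner y) (lift_extent b) `<=` box x m,
      gm (lift_corner y) = y & gm (lift_corner y + lift_extent b) = y + b].
Proof.
move=> hyb; have [_ hgx] := gmap_round hx.
have [_ hgxm] := gmap_round (lattice_addr hx hm).
have [hy hyb1] := subface_at_lattice hyb.
have hgxm' j : half_apart a (x ord0 j + m ord0 j) (gm x ord0 j + p ord0 j).
  by have := hgxm j; rewrite gmapD !mxE.
have lift j := half_apart_lift a_gt0 (gext_coord j) (hgx j) (hgxm' j) (hyb j).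
have hlc : lattice o a (lift_corner y).
  move=> j; rewrite lift_cornerE /lift_lo; case: ifP => _; first exact: hx.
  by have := lattice_addr hx hm j; rewrite mxE.
have hle j : lift_extent b ord0 j = 0 \/ lift_extent b ord0 j = a.
  by rewrite lift_extentE /lift_len; case: ifP => _; [left | apply: hm].
split=> //.
- move=> q hq j; have [lo hi _ _] := lift j; have := hq j.
  by rewrite lift_cornerE lift_extentE; lra.
- by apply: gmap_eq => // j; have [_ _ + _] := lift j; rewrite lift_cornerE.
- apply: gmap_eq => //; first exact: lattice_addr.
  by move=> j; have [_ _ _] := lift j; rewrite !mxE.
Qed.

Lemma vertices_image_box :
  vertices G (s + 1) (box (gm x) p) = gm @` vertices G s (box x m).
Proof.
have [gx hgx] := gmap_round hx; have [gxm hgxm] := gmap_round (lattice_addr hx hm).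
rewrite /vertices Gs Gs1; apply/seteqP; split.
- move=> v [hv vbox]; have hv0 : subface_at (2 * a) (gm x) p v 0.
    apply: subbox_face_at => // [j|q qbox j]; first by left; rewrite mxE.
    by have := qbox j; have := vbox j; rewrite !mxE; lra.
  have [hlc hle sub gv _] := lift_subface hv0.
  exists (lift_corner v) => //; split=> //; apply: sub => j.
  by rewrite lexx lerDl; case: (hle j) => ->; have := a_gt0; lra.
- move=> _ [q [hq qbox] <-]; have [gq hgq] := gmap_round hq; split=> // j.
  have gxmj : in_coset (c1 ord0 j) (2 * a) (gm x ord0 j + p ord0 j).
    by have := gxm j; rewrite gmapD !mxE.
  have hgxmj : half_apart a (x ord0 j + m ord0 j) (gm x ord0 j + p ord0 j).
    by have := hgxm j; rewrite gmapD !mxE.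
  have := gext_ge0 j; case: (in_coset_between a_gt0 (hm j) (hx j) (hq j) (qbox j)) => qj.
  + have := half_apart_uniq a_gt0 (gx j) (gq j) (hgx j); rewrite -qj => /(_ (hgq j)).
    lra.
  + have := half_apart_uniq a_gt0 gxmj (gq j) hgxmj; rewrite -qj => /(_ (hgq j)).
    lra.
Qed.

End Lifting.

Lemma gface_lift x m y b : lattice o a x ->
  (forall j, m ord0 j = 0 \/ m ord0 j = a) ->
  subface_at (2 * a) (gm x) (gext x m) y b ->
  gface G s (box (lift_corner x m y) (lift_extent x m b)) = box y b.
Proof.
move=> hx hm hyb; have [hlc hle _ gy gyb] := lift_subface hx hm hyb.
have [hy _] := subface_at_lattice hx hm hyb.
rewrite /gface -vertices_image_box // /gext gyb gy addrAC subrr add0r /vertices Gs1.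
by apply: hull_lattice_box => // [|j]; [have := twice_a_gt0; lra | case: (hyb j)].
Qed.

Section Correspondence.
Variables x m : pt.
Hypotheses (hx : lattice o a x) (hm : forall j, m ord0 j = 0 \/ m ord0 j = a).
Local Notation e := (box (gm x) (gext x m)).

Lemma image_box_is_face : is_face lam G (s + 1) e.
Proof.
exists #|supp (gext x m)|; apply/kfaceP; exists (gm x), (gext x m).
rewrite Gs1 alphaS alpha_s; split=> //; first by case: (gmap_round hx).
exact: gext_sign.
Qed.

Lemma facet_imageP e1 : facet lam G (s + 1) e1 e ->
  exists y b j, e1 = box y b /\ facet_at (2 * a) (gm x) (gext x m) y b j.
Proof.
move=> [k [/kfaceP [z [p [_ hp cardp ep]]] [/kfaceP [y [b [hy hb cardb ->]]] sub]]].
rewrite alphaS alpha_s in hp hb; rewrite Gs1 in hy.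
have p_ge0 i : 0 <= p ord0 i by case: (hp i) => ->; have := twice_a_gt0; lra.
have [_ pE] := box_inj (gext_ge0 hx hm) p_ge0 ep; rewrite -pE in cardp.
have hyb := subbox_face_at hx hm hy hb sub.
have supp_sub : supp b \subset supp (gext x m).
  apply/fintype.subsetP => i; rewrite !inE; have [[->|bi] [yi yb]] := hyb i.
    by rewrite eqxx.
  move=> _; apply/eqP => p0; move: yi yb; rewrite p0 bi; have := a_gt0; lra.
have [|j jp Sb] := card_subset_succ supp_sub; first by rewrite -cardp cardb.
by exists y, b, j.
Qed.

Lemma lift_subfaces e1 : is_face lam G (s + 1) e1 -> e1 `<=` e ->
  exists f1, [/\ is_face lam G s f1, f1 `<=` box x m & gface G s f1 = e1].
Proof.
move=> [k /kfaceP [y [b [hy hb _ ->]]]] sub.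
rewrite alphaS alpha_s in hb; rewrite Gs1 in hy.
have hyb := subbox_face_at hx hm hy hb sub.
have [hlc hle lsub _ _] := lift_subface hx hm hyb.
exists (box (lift_corner x m y) (lift_extent x m b)); split=> //; last exact: gface_lift.
exists #|supp (lift_extent x m b)|; apply/kfaceP.
by exists (lift_corner x m y), (lift_extent x m b); rewrite Gs alpha_s; split.
Qed.

Lemma lift_facet y b j : facet_at (2 * a) (gm x) (gext x m) y b j ->
  facet lam G s (box (lift_corner x m y) (lift_extent x m b)) (box x m).
Proof.
move=> F; have [pj bj bL] := facet_at_dir twice_a_gt0 (gext_sign hx hm) F.
have [hyb _ _] := F; have [hlc hle lsub _ _] := lift_subface hx hm hyb.
have supp_le : supp (lift_extent x m b) = supp m :\ j.
  apply/setP => i; rewrite !inE lift_extentE /lift_len.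
  have [->|ij] := eqVneq i j; first by rewrite bj pj eqxx (lt0r_neq0 twice_a_gt0) /= eqxx.
  case: (gext_coord hx hm i) => [[-> ->]|[-> [->|p2]]]; rewrite ?eqxx ?andbF //=.
  - by rewrite eqxx.
  - by rewrite (bL i ij p2) (negbTE (lt0r_neq0 twice_a_gt0)).
exists #|supp (lift_extent x m b)|; split; last split=> //; apply/kfaceP.
- exists x, m; rewrite Gs alpha_s supp_le; split=> //.
  by rewrite (cardsD1 j (supp m)) inE (gext_eq2a hx hm pj) (lt0r_neq0 a_gt0).
- by exists (lift_corner x m y), (lift_extent x m b); rewrite Gs alpha_s.
Qed.

Lemma lift_opposite_facets e1 e2 :
  facet lam G (s + 1) e1 e -> facet lam G (s + 1) e2 e -> e1 `&` e2 = set0 ->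
  exists f1 f2, [/\ facet lam G s f1 (box x m), facet lam G s f2 (box x m),
    f1 `&` f2 = set0, gface G s f1 = e1 & gface G s f2 = e2].
Proof.
move=> /facet_imageP [y1 [b1 [j [-> F1]]]] /facet_imageP [y2 [b2 [j2 [-> F2]]]] disj.
have [ej y12] := facet_at_disjoint twice_a_gt0 (gext_sign hx hm) F1 F2 disj.
subst j2.
exists (box (lift_corner x m y1) (lift_extent x m b1)),
       (box (lift_corner x m y2) (lift_extent x m b2)).
have [[hyb1 _ _] [hyb2 _ _]] := (F1, F2).
split; [exact: lift_facet F1 | exact: lift_facet F2 | | exact: gface_lift | exact: gface_lift].
apply/seteqP; split=> // q [/(_ j) q1 /(_ j) q2].
have [pj bj1 _] := facet_at_dir twice_a_gt0 (gext_sign hx hm) F1.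
have [_ bj2 _] := facet_at_dir twice_a_gt0 (gext_sign hx hm) F2.
have mj := gext_eq2a hx hm pj; have [[_ [hy1 _]] [_ [hy2 _]]] := (hyb1 j, hyb2 j).
move: q1 q2; rewrite !lift_cornerE !lift_extentE /lift_lo /lift_len bj1 bj2 pj eqxx.
by rewrite (lt0r_neq0 twice_a_gt0) /=; case: eqP; case: eqP; have := a_gt0; lra.
Qed.

End Correspondence.
End Rounding.

Theorem lemma4 (R : realType) (d : nat) (lam : R) (G : int -> set 'rV[R]_d)
  (s : int) (k : nat) (f : set 'rV[R]_d) :
  (0 < d)%N -> 0 < lam -> grid_family lam G -> kface lam G s k f ->
  exists e : set 'rV[R]_d,
    [/\ is_face lam G (s + 1) e,
        vertices G (s + 1) e = gmap G s @` vertices G s f,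
        (forall e1, is_face lam G (s + 1) e1 -> e1 `<=` e ->
           exists f1, [/\ is_face lam G s f1, f1 `<=` f & gface G s f1 = e1]) &
        (forall e1 e2, facet lam G (s + 1) e1 e -> facet lam G (s + 1) e2 e ->
           e1 `&` e2 = set0 ->
           exists f1 f2, [/\ facet lam G s f1 f, facet lam G s f2 f,
                             f1 `&` f2 = set0, gface G s f1 = e1 &
                             gface G s f2 = e2])].
Proof.
move=> _ lam_gt0 hG /kfaceP [x [m [Gx hm _ ->]]].
have [c Gs_c] := grid_family_lattice hG s.
have [o [eps [Go [eps_sign GS1]]]] := hG.2 s.
have Gs : G s = lattice o (alpha lam s).
  by rewrite Gs_c (lattice_recenter (_ : lattice c _ o)) // -Gs_c.
have Gs1 : G (s + 1) = lattice (o + (alpha lam s / 2) *: eps) (2 * alpha lam s).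
  by rewrite GS1 Gs lattice_dilate // -Gs.
have a_gt0 := alpha_gt0 s lam_gt0; rewrite Gs in Gx.
exists (box (gmap G s x) (gext G s x m)); split.
- by apply: (image_box_is_face (eps := eps)) Gx hm.
- by apply: (vertices_image_box (eps := eps)) Gx hm.
- by apply: (lift_subfaces (eps := eps)) Gx hm.
- by apply: (lift_opposite_facets (eps := eps)) Gx hm.
Qed.
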